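(* Let $(X,\|\cdot\|_X)$ be a Banach space and $\mathcal{K}\subset X$ compact. Then for every $n_0\in\mathbb{N}\cup\{0\}$ and every $\gamma\ge d_{n_0}(\mathcal{K})_X+\mathrm{rad}(\mathcal{K})$ we have $\lim_{n\to\infty}d_n^\gamma(\mathcal{K})_X=0$.
   Context: $\mathrm{rad}(\mathcal{K})=\inf_{g\in X}\sup_{f\in\mathcal{K}}\|f-g\|_X$. The Kolmogorov widths are $d_0(\mathcal{K})_X=\sup_{f\in\mathcal{K}}\|f\|_X$ and, for $n\ge1$, $d_n(\mathcal{K})_X=\inf_{\dim X_n=n}\sup_{f\in\mathcal{K}}\mathrm{dist}(f,X_n)_X$, infimum over linear subspaces $X_n\subset X$ of dimension $n$. For $k\ge1$ and a norm $\|\cdot\|_{Y_k}$ on $\mathbb{R}^k$ let $B_{Y_k}=\{y\in\mathbb{R}^k:\|y\|_{Y_k}\le1\}$; $d^\gamma(\mathcal{K},Y_k)_X=\inf_{\Phi}\sup_{f\in\mathcal{K}}\inf_{y\in B_{Y_k}}\|f-\Phi(y)\|_X$, the infimum over all maps $\Phi:B_{Y_k}\to X$ with $\|\Phi(y)-\Phi(y')\|_X\le\gamma\|y-y'\|_{Y_k}$; and the Lipschitz width is $d_n^\gamma(\mathcal{K})_X=\inf_{1\le k\le n}\inf_{\|\cdot\|_{Y_k}}d^\gamma(\mathcal{K},Y_k)_X$, the inner infimum over all norms on $\mathbb{R}^k$. *)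

From HB Require Import structures.
From mathcomp Require Import all_boot all_order all_algebra.
From mathcomp Require Import all_classical all_reals all_analysis.
Set Implicit Arguments. Unset Strict Implicit. Unset Printing Implicit Defensive.
Import Order.TTheory GRing.Theory Num.Theory.
Import numFieldNormedType.Exports.
Local Open Scope classical_set_scope.
Local Open Scope ring_scope.

Section Widths.
Context {R : realType} {X : normedModType R}.

(* Supremum over f in K of a nonnegative quantity F f, with the convention
   that it is 0 when K is empty (0 is adjoined; harmless since F >= 0). *)
Definition supK (K : set X) (F : X -> R) : \bar R :=
  ereal_sup ([set 0%E] `|` [set (F f)%:E | f in K]).

Definition cheb_radius (K : set X) : \bar R :=
  ereal_inf [set supK K (fun f => `|f - g|) | g in [set: X]].

Definition span_fam (n : nat) (v : 'I_n -> X) : set X :=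
  [set x | exists c : 'I_n -> R, x = \sum_(i < n) c i *: v i].

Definition lin_indep (n : nat) (v : 'I_n -> X) : Prop :=
  forall c : 'I_n -> R, \sum_(i < n) c i *: v i = 0 -> forall i, c i = 0.

Definition subspace_dim (n : nat) (Y : set X) : Prop :=
  exists v : 'I_n -> X, lin_indep v /\ Y = span_fam v.

Definition dist_to (f : X) (Y : set X) : \bar R :=
  ereal_inf [set (`|f - g|)%:E | g in Y].

Definition kolmogorov_width (K : set X) (n : nat) : \bar R :=
  if n is 0 then supK K (fun f => `|f|)
  else ereal_inf [set ereal_sup ([set 0%E] `|` [set dist_to f Y | f in K])
                 | Y in [set Y | subspace_dim n Y]].

Definition is_norm (k : nat) (N : 'rV[R]_k -> R) : Prop :=
  [/\ forall y, 0 <= N y,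
      forall y, N y = 0 -> y = 0,
      forall (a : R) y, N (a *: y) = `|a| * N y
    & forall y y', N (y + y') <= N y + N y'].

Definition unit_ball (k : nat) (N : 'rV[R]_k -> R) : set 'rV[R]_k :=
  [set y | N y <= 1].

(* Phi : B_{Y_k} -> X is gamma-Lipschitz (values off the ball are irrelevant) *)
Definition lipschitz_on_ball (gamma : R) (k : nat) (N : 'rV[R]_k -> R)
    (Phi : 'rV[R]_k -> X) : Prop :=
  forall y y', unit_ball N y -> unit_ball N y' ->
    `|Phi y - Phi y'| <= gamma * N (y - y').

Definition lip_width_fixed (gamma : R) (K : set X) (k : nat)
    (N : 'rV[R]_k -> R) : \bar R :=
  ereal_inf [set ereal_sup ([set 0%E] `|`
                 [set ereal_inf [set (`|f - Phi y|)%:E | y in unit_ball N]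
                 | f in K])
            | Phi in [set Phi | lipschitz_on_ball gamma N Phi]].

Definition lipschitz_width (gamma : R) (K : set X) (n : nat) : \bar R :=
  ereal_inf [set d | exists k : nat, (1 <= k <= n)%N /\
               exists N : 'rV[R]_k -> R, is_norm N /\ d = lip_width_fixed gamma K N].

End Widths.

From HB Require Import structures.
From mathcomp Require Import all_boot all_order all_algebra.
From mathcomp Require Import all_classical all_reals all_analysis.
Set Implicit Arguments. Unset Strict Implicit. Unset Printing Implicit Defensive.
Import Order.TTheory GRing.Theory Num.Theory.
Import numFieldNormedType.Exports.
Local Open Scope classical_set_scope.
Local Open Scope ring_scope.

(* Only [gamma >= rad(K)] is needed.  Fix [e > 0], a center [g] with
   [K ⊂ B(g, gamma + e)] (it exists as [rad(K) < gamma + e]) and a finite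
   [e]-net [x_1, ..., x_m] of [K].  On the unit ball of [l^1(R^(m+1))] the
   affine map [y |-> g + sum_i y_i t (x_i - g)], with [t = gamma / (gamma + e)],
   is [gamma]-Lipschitz, and its value at the [i]-th basis vector is within [e]
   of [x_i]; hence [d_n^gamma(K) <= 2e] for all [n > m]. *)

Section LipschitzWidth.
Context {R : realType} {X : normedModType R}.

Lemma compact_finite_net (K : set X) (e : R) : compact K -> 0 < e ->
  exists s : seq X, (forall x, x \in s -> K x) /\
    forall f, K f -> exists2 x, x \in s & `|f - x| <= e.
Proof.
rewrite compact_cover => /(_ X K (fun x => ball x e)) + e0.
case=> [x _|f Kf|D DK cover]; first exact: ball_open.
  by exists f => //; exact: ballxx.
exists (finmap.enum_fset D); split=> [x /DK|f /cover [x xD]]; first by rewrite inE.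
by rewrite -ball_normE /ball_ /= distrC => /ltW; exists x.
Qed.

Lemma supK_ge0 (K : set X) (F : X -> R) : (0 <= supK K F)%E.
Proof. by apply: ereal_sup_ubound; left. Qed.

Lemma cheb_radius_ge0 (K : set X) : (0 <= cheb_radius K)%E.
Proof. by apply/ereal_infP => _ [g _ <-]; exact: supK_ge0. Qed.

Lemma kolmogorov_width_ge0 (K : set X) (n : nat) : (0 <= kolmogorov_width K n)%E.
Proof.
case: n => [|n] /=; first exact: supK_ge0.
by apply/ereal_infP => _ [Y _ <-]; apply: ereal_sup_ubound; left.
Qed.

Lemma lipschitz_width_ge0 (gamma : R) (K : set X) (n : nat) :
  (0 <= lipschitz_width gamma K n)%E.
Proof.
apply/ereal_infP => _ [k [_ [N [_ ->]]]].
by apply/ereal_infP => _ [Phi _ <-]; apply: ereal_sup_ubound; left.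
Qed.

Lemma cheb_radius_center (K : set X) (r : R) : (cheb_radius K < r%:E)%E ->
  exists g, forall f, K f -> `|f - g| <= r.
Proof.
move=> /ereal_inf_lt [_ [g _ <-]] radK; exists g => f Kf.
rewrite -lee_fin ltW // (le_lt_trans _ radK) //.
by apply: ereal_sup_ubound; right; exists f.
Qed.

Lemma lip_width_fixed_le (gamma : R) (K : set X) (k : nat) (N : 'rV[R]_k -> R)
    (Phi : 'rV[R]_k -> X) (r : R) :
  lipschitz_on_ball gamma N Phi -> 0 <= r ->
  (forall f, K f -> exists2 y, unit_ball N y & `|f - Phi y| <= r) ->
  (lip_width_fixed gamma K N <= r%:E)%E.
Proof.
move=> lipPhi r0 approx; apply: ge_ereal_inf; eexists; first by exists Phi.
apply: ge_ereal_sup => _ [->|[f Kf <-]]; first by rewrite lee_fin.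
have [y By fy] := approx f Kf.
by apply: ge_ereal_inf; exists (`|f - Phi y|)%:E; [exists y | rewrite lee_fin].
Qed.

Lemma lipschitz_width_le_fixed (gamma : R) (K : set X) (n k : nat)
    (N : 'rV[R]_k -> R) :
  (1 <= k <= n)%N -> is_norm N ->
  (lipschitz_width gamma K n <= lip_width_fixed gamma K N)%E.
Proof. by move=> kn normN; apply: ereal_inf_lbound; exists k; split => //; exists N. Qed.

Definition l1_norm {k : nat} (y : 'rV[R]_k) : R := \sum_(i < k) `|y ord0 i|.

Lemma l1_norm_is_norm (k : nat) : is_norm (@l1_norm k).
Proof.
split=> [y|y y0|a y|y y'].
- exact: sumr_ge0.
- apply/rowP => j; rewrite mxE; apply/normr0_eq0.
  exact: (psumr_eq0P (fun i _ => normr_ge0 (y ord0 i)) y0).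
- by rewrite /l1_norm mulr_sumr; apply: eq_bigr => i _; rewrite mxE normrM.
- by rewrite /l1_norm -big_split; apply: ler_sum => i _; rewrite mxE ler_normD.
Qed.

Lemma l1_norm_delta (k : nat) (j : 'I_k) : l1_norm (delta_mx ord0 j) = 1.
Proof.
rewrite /l1_norm (bigD1 j) //= big1 => [|i ij].
  by rewrite mxE !eqxx normr1 addr0.
by rewrite mxE eqxx (negbTE ij) normr0.
Qed.

Definition affine_comb {k : nat} (g : X) (w : 'I_k -> X) (y : 'rV[R]_k) : X :=
  g + \sum_(i < k) y ord0 i *: w i.

Lemma affine_comb_delta (k : nat) (g : X) (w : 'I_k -> X) (j : 'I_k) :
  affine_comb g w (delta_mx ord0 j) = g + w j.
Proof.
rewrite /affine_comb (bigD1 j) //= big1 => [|i ij].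
  by rewrite mxE !eqxx scale1r addr0.
by rewrite mxE eqxx (negbTE ij) scale0r.
Qed.

Lemma affine_comb_lipschitz (k : nat) (gamma : R) (g : X) (w : 'I_k -> X) :
  (forall i, `|w i| <= gamma) ->
  lipschitz_on_ball gamma (@l1_norm k) (affine_comb g w).
Proof.
move=> wle y y' _ _; rewrite /affine_comb opprD addrACA subrr add0r -sumrB.
rewrite (le_trans (ler_norm_sum _ _ _)) // /l1_norm mulr_sumr.
apply: ler_sum => i _; rewrite -scalerBl normrZ mulrC !mxE.
exact: ler_wpM2r.
Qed.

Section Shrink.
Variables (gamma delta : R) (v : X).
Hypotheses (gamma0 : 0 <= gamma) (delta0 : 0 < delta) (vle : `|v| <= gamma + delta).

Let t := gamma / (gamma + delta).
Let gd0 : 0 < gamma + delta. Proof. by rewrite ltr_wpDl. Qed.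
Let t0 : 0 <= t. Proof. by rewrite divr_ge0 // ltW. Qed.
Let t1 : t <= 1. Proof. by rewrite ler_pdivrMr // mul1r lerDl ltW. Qed.
Let t_gd : t * (gamma + delta) = gamma. Proof. by rewrite mulfVK // gt_eqF. Qed.

Lemma norm_shrink_le : `|t *: v| <= gamma.
Proof. by rewrite normrZ ger0_norm // -t_gd ler_wpM2l. Qed.

Lemma norm_shrink_sub_le : `|v - t *: v| <= delta.
Proof.
rewrite -{1}[v]scale1r -scalerBl normrZ ger0_norm ?subr_ge0 //.
rewrite (le_trans (ler_wpM2l _ vle)) ?subr_ge0 //.
by rewrite mulrBl mul1r t_gd addrC addKr.
Qed.

End Shrink.

Lemma lipschitz_width_le_net (gamma delta e : R) (K : set X) (g : X) (s : seq X) :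
  0 <= gamma -> 0 < delta -> 0 <= e ->
  (forall x, x \in s -> `|x - g| <= gamma + delta) ->
  (forall f, K f -> exists2 x, x \in s & `|f - x| <= e) ->
  forall n, (size s < n)%N -> (lipschitz_width gamma K n <= (e + delta)%:E)%E.
Proof.
move=> gamma0 delta0 e0 sg net n sn.
pose t := gamma / (gamma + delta).
pose w (i : 'I_(size s).+1) := t *: (nth g s i - g).
have wle i : `|w i| <= gamma.
  apply: norm_shrink_le => //; have [/(mem_nth g)/sg //|si] := ltnP i (size s).
  by rewrite nth_default // subrr normr0 addr_ge0 // ltW.
apply: le_trans (@lipschitz_width_le_fixed gamma K n (size s).+1 l1_norm _
  (l1_norm_is_norm _)) _; first by rewrite sn.
apply: (lip_width_fixed_le (affine_comb_lipschitz g wle)).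
  by rewrite addr_ge0 // ltW.
move=> f Kf; have [x xs fx] := net f Kf.
have xi : (index x s < (size s).+1)%N by rewrite ltnS ltnW // index_mem.
exists (delta_mx ord0 (Ordinal xi)); first by rewrite /unit_ball /= l1_norm_delta.
rewrite affine_comb_delta /w /= nth_index //.
have -> : f - (g + t *: (x - g)) = (f - x) + ((x - g) - t *: (x - g)).
  by rewrite opprD addrA [RHS]addrA subrKA.
by rewrite (le_trans (ler_normD _ _)) // lerD // norm_shrink_sub_le // sg.
Qed.

Lemma lipschitz_width_eventually_le (gamma e : R) (K : set X) :
  compact K -> (cheb_radius K <= gamma%:E)%E -> 0 < e ->
  \forall n \near \oo, (lipschitz_width gamma K n <= e%:E)%E.
Proof.
move=> cK radK e0; have e20 : 0 < e / 2 by rewrite divr_gt0.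
have gamma0 : 0 <= gamma by rewrite -lee_fin (le_trans (cheb_radius_ge0 K)).
have [g Kg] : exists g, forall f, K f -> `|f - g| <= gamma + e / 2.
  by apply: cheb_radius_center; rewrite (le_lt_trans radK) // lte_fin ltrDl.
have [s [sK net]] := compact_finite_net cK e20.
near=> n; rewrite [e in e%:E]splitr.
apply: (lipschitz_width_le_net gamma0 e20 (ltW e20) _ net) => [x /sK|]; first exact: Kg.
by near: n; exact: nbhs_infty_gt.
Unshelve. all: end_near. Qed.

End LipschitzWidth.

Lemma ge0_cvge0 {R : realType} (u : nat -> \bar R) : (forall n, 0 <= u n)%E ->
  (forall e : R, 0 < e -> \forall n \near \oo, (u n <= e%:E)%E) -> u @ \oo --> 0%E.
Proof.
move=> u0 ule; apply/fine_cvgP; split.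
  apply: filterS (ule 1 ltr01) => n un1.
  by rewrite ge0_fin_numE // (le_lt_trans un1) ?ltey.
apply/cvgrPdist_le => e e0; apply: filterS (ule e e0) => n une /=.
have un_fin : u n \is a fin_num by rewrite ge0_fin_numE // (le_lt_trans une) ?ltey.
by rewrite sub0r normrN ger0_norm ?fine_ge0 // -lee_fin fineK.
Qed.

Theorem corollary5p3 (R : realType) (X : completeNormedModType R) (K : set X)
    (hK : compact K) (n0 : nat) (gamma : R)
    (hgamma : (kolmogorov_width K n0 + cheb_radius K <= gamma%:E)%E) :
  (fun n => lipschitz_width gamma K n) @ \oo --> 0%E.
Proof.
have radK : (cheb_radius K <= gamma%:E)%E.
  exact: le_trans (lee_paddl (kolmogorov_width_ge0 K n0) (lexx _)) hgamma.
apply: ge0_cvge0 => [n|e e0]; first exact: lipschitz_width_ge0.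
exact: lipschitz_width_eventually_le.
Qed.
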